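(* Let $n\ge2$, let $\mathrm S\subseteq\{B_{ij}\}\cup\{C_{ij}\}\cup\{D_{ij}\}$ ($1\le i<j\le n$) with associated edge-colored multigraph $\mathscr G_{\mathrm S}$, and let $A\in\mathfrak{su}(n)$ with associated edge-colored multigraph $\mathscr G_A$. Suppose $\mathscr G_{\mathrm S}$ is connected. Then the real Lie algebra generated by $\{A\}\cup\mathrm S$ equals $\mathfrak{su}(n)$ if and only if $\mathscr G_A\cup\mathscr G_{\mathrm S}$ has a self-loop or a cycle containing an odd number of Red edges.
   Context: $E_{ij}$ is the $n\times n$ matrix unit; $B_{ij}=E_{ij}-E_{ji}$, $C_{ij}=\mathrm i(E_{ij}+E_{ji})$, $D_{ij}=\mathrm i(E_{ii}-E_{jj})$; $\mathfrak{su}(n)$ is the real Lie algebra of traceless skew-Hermitian matrices with commutator bracket. Edge-colored multigraphs have node set $\{1,\dots,n\}$ and edges $\{i,j;c\}$ with $c\in\{\text{Blue},\text{Red},\text{Green}\}$ ($\{i,i;c\}$ a self-loop; same endpoints, different colors are distinct edges). $\mathscr G_{\mathrm S}$: a Blue edge $\{i,j\}$ for each $B_{ij}\in\mathrm S$, a Red edge $\{i,j\}$ for each $C_{ij}\in\mathrm S$, Green self-loops $\{i,i\},\{j,j\}$ for each $D_{ij}\in\mathrm S$. $\mathscr G_A$: a Blue edge $\{i,j\}$ ($i\ne j$) iff $\mathrm{Re}(A_{ij})\ne0$, a Red edge $\{i,j\}$ ($i\ne j$) iff $\mathrm{Im}(A_{ij})\ne0$, a Green self-loop $\{i,i\}$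 iff $A_{ii}\neq0$. The union has the union of edge sets. A cycle is a closed walk (alternating sequence of nodes and edges with consecutive endpoints, beginning and ending at the same node); connected means any two nodes are joined by a walk. *)

From mathcomp Require Import all_boot all_order all_algebra.
From mathcomp Require Import complex.
From mathcomp Require Import reals.
Set Implicit Arguments. Unset Strict Implicit. Unset Printing Implicit Defensive.
Import GRing.Theory Num.Theory.
Local Open Scope ring_scope.
Local Open Scope complex_scope.

Section Defs.
Variables (R : realType) (n : nat).
Notation C := R[i].
Notation M := 'M[C]_n.

Definition Emx (i j : 'I_n) : M := delta_mx i j.
Definition Bmx (i j : 'I_n) : M := Emx i j - Emx j i.
Definition Cmx (i j : 'I_n) : M := 'i *: (Emx i j + Emx j i).
Definition Dmx (i j : 'I_n) : M := 'i *: (Emx i i - Emx j j).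

Definition in_su (X : M) : Prop :=
  (forall i j : 'I_n, (X j i)^* = - X i j) /\ \tr X = 0.

Definition lie_br (X Y : M) : M := X *m Y - Y *m X.

Definition lie_gen (G : M -> Prop) (X : M) : Prop :=
  forall L : M -> Prop,
    (forall Y, G Y -> L Y) ->
    L 0 ->
    (forall Y Z, L Y -> L Z -> L (Y + Z)) ->
    (forall (r : R) Y, L Y -> L (r%:C *: Y)) ->
    (forall Y Z, L Y -> L Z -> L (lie_br Y Z)) ->
    L X.
End Defs.

Inductive gkind := GB | GC | GD.

Definition gen_mx (R : realType) (n : nat) (k : gkind) (i j : 'I_n) : 'M[R[i]]_n :=
  match k with GB => Bmx R i j | GC => Cmx R i j | GD => Dmx R i j end.

Inductive color := Blue | Red | Green.
Definition is_red (c : color) : bool := if c is Red then true else false.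

(* An edge-colored multigraph on 'I_n is given by its edge predicate
   E i j c : "there is an edge {i,j} of color c" (symmetric in i, j). *)
Definition egraph (n : nat) := 'I_n -> 'I_n -> color -> Prop.

(* G_S, where S k i j means that the generator of kind k with indices (i,j)
   belongs to S *)
Definition graph_S (n : nat) (S : gkind -> 'I_n -> 'I_n -> Prop) : egraph n :=
  fun i j c =>
    (c = Blue /\ (S GB i j \/ S GB j i)) \/
    (c = Red /\ (S GC i j \/ S GC j i)) \/
    (c = Green /\ i = j /\ exists k, S GD i k \/ S GD k i).

Definition graph_A (R : realType) (n : nat) (A : 'M[R[i]]_n) : egraph n :=
  fun i j c =>
    (i != j /\ c = Blue /\ ('Re (A i j) != 0 \/ 'Re (A j i) != 0)) \/
    (i != j /\ c = Red /\ ('Im (A i j) != 0 \/ 'Im (A j i) != 0)) \/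
    (i = j /\ c = Green /\ A i i != 0).

Definition graph_union (n : nat) (E F : egraph n) : egraph n :=
  fun i j c => E i j c \/ F i j c.

(* A walk from v is a list of steps (next node, color of the edge used). *)
Fixpoint is_walk (n : nat) (E : egraph n) (v : 'I_n) (p : seq ('I_n * color)) : Prop :=
  match p with
  | [::] => True
  | (w, c) :: p' => E v w c /\ is_walk E w p'
  end.

Definition walk_end (n : nat) (v : 'I_n) (p : seq ('I_n * color)) : 'I_n :=
  last v (map fst p).

Definition connected (n : nat) (E : egraph n) : Prop :=
  forall u v : 'I_n, exists p, is_walk E u p /\ walk_end u p = v.

Definition has_self_loop (n : nat) (E : egraph n) : Prop :=
  exists (i : 'I_n) c, E i i c.

(* a cycle (closed walk) whose number of Red edges, counted with
   multiplicity along the walk, is odd *)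
Definition has_odd_red_cycle (n : nat) (E : egraph n) : Prop :=
  exists (v : 'I_n) p, is_walk E v p /\ walk_end v p = v /\
    odd (count (fun s => is_red s.2) p).

(* The real Lie algebra L generated by S and A always lies in su(n).  Brackets
   of the B_ij, C_ij along a path of G_S put one of B_uv, C_uv in L for every pair
   u <> v.  If some pair has both, brackets with D_uv spread this to every B, C
   and D, and these span su(n).  Otherwise record by kappa(u,v) whether C_uv is in
   L: the bracket table gives kappa(u,w) = kappa(u,v) xor kappa(v,w), so kappa is
   the coboundary of a signing sigma of the nodes; the double brackets ad_B^2 and
   ad_C^2 applied to A show that A respects sigma as well.  Then every edge of
   G_A u G_S is Red exactly when it joins nodes of opposite signs, and there is
   neither a self-loop nor an odd Red cycle.
   Conversely, without self-loops and odd Red cycles the connected graph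
   G_A u G_S has such a balanced signing sigma.  Conjugating by the diagonal
   unitary diag(i^sigma) makes A and every generator real, hence all of L, while
   it leaves D_12 imaginary; so L <> su(n). *)

From mathcomp Require Import all_boot all_order all_algebra.
From mathcomp Require Import complex reals boolp.
From mathcomp Require Import ring lra.
Import GRing.Theory Num.Theory.
Set Implicit Arguments. Unset Strict Implicit. Unset Printing Implicit Defensive.
Local Open Scope ring_scope.
Local Open Scope complex_scope.

(* [Re] and [Im] are the real-valued projections of [R[i]], not the [R[i]]-valued
   ['Re] and ['Im] of [Num].  Beware also that ['i] denotes the complex unit of
   [complex] in [complex_scope] (as in the definitions of [Cmx] and [Dmx]) but the
   convertible ['i] of [Num] under ring operations. *)
Local Notation Re := (@complex.Re _).
Local Notation Im := (@complex.Im _).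

Section ComplexParts.
Variable R : realType.
Implicit Types (x y : R[i]) (r : R).

Lemma Im_add x y : Im (x + y) = Im x + Im y. Proof. by case: x => a b; case: y => c d. Qed.
Lemma Re_opp x : Re (- x) = - Re x. Proof. by case: x => a b. Qed.
Lemma Im_opp x : Im (- x) = - Im x. Proof. by case: x => a b. Qed.
Lemma Re_mul x y : Re (x * y) = Re x * Re y - Im x * Im y.
Proof. by case: x => a b; case: y => c d /=; ring. Qed.
Lemma Im_mul x y : Im (x * y) = Re x * Im y + Im x * Re y.
Proof. by case: x => a b; case: y => c d /=; ring. Qed.
Lemma Re_conjc x : Re (conjc x) = Re x. Proof. by case: x => a b. Qed.
Lemma Im_nat k : Im (k%:R : R[i]) = 0. Proof. by rewrite -(rmorph_nat (real_complex R)). Qed.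

Lemma Im_sum (I : Type) (s : seq I) (P : pred I) (F : I -> R[i]) :
  Im (\sum_(i <- s | P i) F i) = \sum_(i <- s | P i) Im (F i).
Proof. exact: (big_morph _ Im_add (erefl : Im 0 = 0)). Qed.

Lemma real_complexN r : (- r)%:C = - r%:C :> R[i]. Proof. exact: rmorphN. Qed.

Lemma real_complex_eq0 r : (r%:C == 0 :> R[i]) = (r == 0).
Proof. by rewrite eq_complex /= eqxx andbT. Qed.

Lemma complexRe_eq0 x : ('Re x == 0) = (Re x == 0).
Proof. by rewrite -complexRe real_complex_eq0. Qed.

Lemma complexIm_eq0 x : ('Im x == 0) = (Im x == 0).
Proof. by rewrite -complexIm real_complex_eq0. Qed.

Lemma conjcD x y : conjc (x + y) = conjc x + conjc y. Proof. exact: rmorphD. Qed.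
Lemma conjcB x y : conjc (x - y) = conjc x - conjc y. Proof. exact: rmorphB. Qed.
Lemma conjcM x y : conjc (x * y) = conjc x * conjc y. Proof. exact: rmorphM. Qed.

Lemma conjc_i : conjc 'i%R = - 'i :> R[i].
Proof. by apply/eqP; rewrite eq_complex /= oppr0 !eqxx. Qed.

Lemma mulcii : 'i * 'i = -1 :> R[i].
Proof. by rewrite -expr2 sqr_i. Qed.

Lemma conjcE x : conjc x = (Re x)%:C - 'i * (Im x)%:C.
Proof. by case: x => a b; apply/eqP; rewrite eq_complex /=; apply/andP; split; apply/eqP; ring. Qed.

Lemma Re_i : Re ('i%R : R[i]) = 0. Proof. by []. Qed.
Lemma Im_i : Im ('i%R : R[i]) = 1. Proof. by []. Qed.
Lemma Re_1 : Re (1 : R[i]) = 1. Proof. by []. Qed.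
Lemma Im_1 : Im (1 : R[i]) = 0. Proof. by []. Qed.
Lemma Im_real_complex r : Im (r%:C : R[i]) = 0. Proof. by []. Qed.

Lemma complex_decomp x : x = (Re x)%:C + 'i * (Im x)%:C.
Proof. exact: complexE. Qed.

Lemma pure_imaginaryE x : Re x = 0 -> x = 'i * (Im x)%:C.
Proof. by move=> h; rewrite {1}[x]complex_decomp h add0r. Qed.
End ComplexParts.

Section MatrixUnits.
Variables (R : realType) (n : nat).
Local Notation M := 'M[R[i]]_n.
Implicit Types (i j k a b r c : 'I_n) (X Y : M).

Lemma entryD X Y r c : (X + Y) r c = X r c + Y r c. Proof. by rewrite mxE. Qed.
Lemma entryB X Y r c : (X - Y) r c = X r c - Y r c. Proof. by rewrite !mxE. Qed.
Lemma entryN X r c : (- X) r c = - X r c. Proof. by rewrite mxE. Qed.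
Lemma entry0 r c : (0 : M) r c = 0. Proof. by rewrite mxE. Qed.
Lemma entryZ (x : R[i]) X r c : (x *: X) r c = x * X r c. Proof. by rewrite mxE. Qed.

Lemma EmxE i j r c : Emx R i j r c = ((r == i) && (c == j))%:R.
Proof. by rewrite mxE. Qed.

Lemma BmxE a b r c :
  Bmx R a b r c = ((r == a) && (c == b))%:R - ((r == b) && (c == a))%:R.
Proof. by rewrite !mxE. Qed.

Lemma CmxE a b r c :
  Cmx R a b r c = 'i * (((r == a) && (c == b))%:R + ((r == b) && (c == a))%:R).
Proof. by rewrite !mxE. Qed.

Lemma DmxE a b r c :
  Dmx R a b r c = 'i * (((r == a) && (c == a))%:R - ((r == b) && (c == b))%:R).
Proof. by rewrite !mxE. Qed.

Lemma Emx_mulmxE i j Y r c : (Emx R i j *m Y) r c = (r == i)%:R * Y j c.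
Proof.
rewrite mxE (bigD1 j) //= mxE eqxx andbT big1 ?addr0 // => k /negbTE hk.
by rewrite mxE hk andbF mul0r.
Qed.

Lemma mulmx_EmxE i j Y r c : (Y *m Emx R i j) r c = Y r i * (c == j)%:R.
Proof.
rewrite mxE (bigD1 i) //= mxE eqxx /= big1 ?addr0 // => k /negbTE hk.
by rewrite mxE hk mulr0.
Qed.

Lemma lie_br_BmxE a b Y r c : lie_br (Bmx R a b) Y r c =
  (r == a)%:R * Y b c - (r == b)%:R * Y a c - (Y r a * (c == b)%:R - Y r b * (c == a)%:R).
Proof. by rewrite /lie_br /Bmx mulmxBl mulmxBr !(entryB, entryZ, entryD) !Emx_mulmxE !mulmx_EmxE. Qed.

Lemma lie_br_CmxE a b Y r c : lie_br (Cmx R a b) Y r c =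
  'i * ((r == a)%:R * Y b c + (r == b)%:R * Y a c - (Y r a * (c == b)%:R + Y r b * (c == a)%:R)).
Proof.
rewrite /lie_br /Cmx -scalemxAl -scalemxAr mulmxDl mulmxDr !(entryB, entryZ, entryD).
by rewrite !Emx_mulmxE !mulmx_EmxE; ring.
Qed.

Lemma lie_br_DmxE a b Y r c : lie_br (Dmx R a b) Y r c =
  'i * ((r == a)%:R * Y a c - (r == b)%:R * Y b c - (Y r a * (c == a)%:R - Y r b * (c == b)%:R)).
Proof.
rewrite /lie_br /Dmx -scalemxAl -scalemxAr mulmxBl mulmxBr !(entryB, entryZ).
by rewrite !Emx_mulmxE !mulmx_EmxE; ring.
Qed.

End MatrixUnits.

Ltac case_ord_eqs :=
  repeat match goal with
  | H : is_true (?x != ?x) |- _ => by rewrite eqxx in H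
  | |- context [?x == ?x] => rewrite eqxx
  | |- context [?x == ?y] =>
      lazymatch type of x with
      | ordinal _ => case: (eqVneq x y) => [?|?]; [subst x|]
      end
  end.

Ltac entry_ring := case_ord_eqs; rewrite /= ?andbF ?andbT /=;
  match goal with RR : realType |- _ => ring: (mulcii RR) end.

Ltac mx_entrywise := apply/matrixP => r c;
  rewrite ?(entryD, entryB, entryN, entryZ, entry0, lie_br_BmxE, lie_br_CmxE, lie_br_DmxE, BmxE, CmxE, DmxE, EmxE).

Section BracketTable.
Variables (R : realType) (n : nat).
Implicit Types (i j k a b : 'I_n).

Lemma Bmx_swap i j : Bmx R j i = - Bmx R i j.
Proof. mx_entrywise; entry_ring. Qed.
Lemma Cmx_swap i j : Cmx R j i = Cmx R i j.
Proof. mx_entrywise; entry_ring. Qed.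
Lemma Dmx_swap i j : Dmx R j i = - Dmx R i j.
Proof. mx_entrywise; entry_ring. Qed.

Lemma lie_br_BB i j k : i != j -> j != k -> i != k ->
  lie_br (Bmx R i j) (Bmx R j k) = Bmx R i k.
Proof. by move=> *; mx_entrywise; entry_ring. Qed.
Lemma lie_br_BC i j k : i != j -> j != k -> i != k ->
  lie_br (Bmx R i j) (Cmx R j k) = Cmx R i k.
Proof. by move=> *; mx_entrywise; entry_ring. Qed.
Lemma lie_br_CB i j k : i != j -> j != k -> i != k ->
  lie_br (Cmx R i j) (Bmx R j k) = Cmx R i k.
Proof. by move=> *; mx_entrywise; entry_ring. Qed.
Lemma lie_br_CC i j k : i != j -> j != k -> i != k ->
  lie_br (Cmx R i j) (Cmx R j k) = - Bmx R i k.
Proof. by move=> *; mx_entrywise; entry_ring. Qed.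
Lemma lie_br_DB i j k : i != j -> j != k -> i != k ->
  lie_br (Dmx R i j) (Bmx R i k) = Cmx R i k.
Proof. by move=> *; mx_entrywise; entry_ring. Qed.
Lemma lie_br_DC i j k : i != j -> j != k -> i != k ->
  lie_br (Dmx R i j) (Cmx R i k) = - Bmx R i k.
Proof. by move=> *; mx_entrywise; entry_ring. Qed.
Lemma lie_br_BC2 a b : a != b ->
  lie_br (Bmx R a b) (Cmx R a b) = 2%:R *: Dmx R a b.
Proof. by move=> *; mx_entrywise; entry_ring. Qed.
Lemma lie_br_DB2 a b : a != b ->
  lie_br (Dmx R a b) (Bmx R a b) = 2%:R *: Cmx R a b.
Proof. by move=> *; mx_entrywise; entry_ring. Qed.
Lemma lie_br_DC2 a b : a != b ->
  lie_br (Dmx R a b) (Cmx R a b) = - (2%:R *: Bmx R a b).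
Proof. by move=> *; mx_entrywise; entry_ring. Qed.
End BracketTable.

Section DoubleBracket.
Variables (R : realType) (n : nat).
Local Notation M := 'M[R[i]]_n.
Implicit Types (a b r c : 'I_n) (X : M).

Definition ad2 (X Y : M) : M := lie_br X (lie_br X Y).

Lemma ad2_BmxE a b X r c : a != b -> ad2 (Bmx R a b) X r c =
  - ((r == a)%:R + (r == b)%:R) * X r c - ((c == a)%:R + (c == b)%:R) * X r c
  - 2%:R * ((r == a)%:R * (c == b)%:R * X b a - (r == a)%:R * (c == a)%:R * X b b
            - (r == b)%:R * (c == b)%:R * X a a + (r == b)%:R * (c == a)%:R * X a b).
Proof. by move=> hab; rewrite /ad2 !lie_br_BmxE; entry_ring. Qed.

Lemma ad2_CmxE a b X r c : a != b -> ad2 (Cmx R a b) X r c =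
  - ((r == a)%:R + (r == b)%:R) * X r c - ((c == a)%:R + (c == b)%:R) * X r c
  + 2%:R * ((r == a)%:R * (c == a)%:R * X b b + (r == a)%:R * (c == b)%:R * X b a
            + (r == b)%:R * (c == a)%:R * X a b + (r == b)%:R * (c == b)%:R * X a a).
Proof. by move=> hab; rewrite /ad2 !lie_br_CmxE; entry_ring. Qed.

(* ad_(B_ab) has eigenvalues 0, +-i and +-2i, so ad^4 + ad^2 = ad^2 (ad^2 + 1)
   projects onto the +-2i-eigenspace, spanned by D_ab and C_ab; likewise for C_ab. *)
Lemma ad2_Bmx_projection a b X : a != b ->
  ad2 (Bmx R a b) (ad2 (Bmx R a b) X) + ad2 (Bmx R a b) X =
  (6%:R * (X a a - X b b)) *: (Emx R a a - Emx R b b)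
  + (6%:R * (X a b + X b a)) *: (Emx R a b + Emx R b a).
Proof.
move=> hab; apply/matrixP => r c.
by rewrite entryD !ad2_BmxE // !(entryD, entryB, entryN, entryZ, EmxE); entry_ring.
Qed.

Lemma ad2_Cmx_projection a b X : a != b ->
  ad2 (Cmx R a b) (ad2 (Cmx R a b) X) + ad2 (Cmx R a b) X =
  (6%:R * (X a a - X b b)) *: (Emx R a a - Emx R b b)
  + (6%:R * (X a b - X b a)) *: (Emx R a b - Emx R b a).
Proof.
move=> hab; apply/matrixP => r c.
by rewrite entryD !ad2_CmxE // !(entryD, entryB, entryN, entryZ, EmxE); entry_ring.
Qed.

Lemma extract_Cmx_by_Bmx a b (al be : R) : a != b ->
  (2 * be)%:C *: (al%:C *: Dmx R a b + be%:C *: Cmx R a b)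
  + (- al)%:C *: lie_br (Bmx R a b) (al%:C *: Dmx R a b + be%:C *: Cmx R a b)
  = (2 * (al ^+ 2 + be ^+ 2))%:C *: Cmx R a b.
Proof.
move=> *; mx_entrywise; rewrite !(rmorphM, rmorphD, rmorphN, rmorphXn, rmorph_nat).
entry_ring.
Qed.

Lemma extract_Bmx_by_Cmx a b (al be : R) : a != b ->
  (2 * be)%:C *: (al%:C *: Dmx R a b + be%:C *: Bmx R a b)
  + al%:C *: lie_br (Cmx R a b) (al%:C *: Dmx R a b + be%:C *: Bmx R a b)
  = (2 * (al ^+ 2 + be ^+ 2))%:C *: Bmx R a b.
Proof.
move=> *; mx_entrywise; rewrite !(rmorphM, rmorphD, rmorphN, rmorphXn, rmorph_nat).
entry_ring.
Qed.

End DoubleBracket.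

Section LieGen.
Variables (R : realType) (n : nat) (G : 'M[R[i]]_n -> Prop).
Local Notation L := (lie_gen G).
Implicit Types X Y : 'M[R[i]]_n.

Lemma lie_gen_base X : G X -> L X.
Proof. by move=> GX P hG *; apply: hG. Qed.

Lemma lie_gen0 : L 0.
Proof. by move=> P _ h0. Qed.

Lemma lie_genD X Y : L X -> L Y -> L (X + Y).
Proof. by move=> hX hY P hG h0 hD hZ hB; apply: (hD); [exact: hX | exact: hY]. Qed.

Lemma lie_genZ (r : R) X : L X -> L (r%:C *: X).
Proof. by move=> hX P hG h0 hD hZ hB; apply: (hZ); exact: hX. Qed.

Lemma lie_gen_br X Y : L X -> L Y -> L (lie_br X Y).
Proof. by move=> hX hY P hG h0 hD hZ hB; apply: (hB); [exact: hX | exact: hY]. Qed.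

Lemma lie_genN X : L X -> L (- X).
Proof. by move=> hX; have := lie_genZ (-1) hX; rewrite rmorphN1 scaleN1r. Qed.

Lemma lie_genNE X : L (- X) <-> L X.
Proof. by split=> /lie_genN //; rewrite opprK. Qed.

Lemma lie_gen_unscale (r : R) X : r != 0 -> L (r%:C *: X) -> L X.
Proof.
move=> hr /(lie_genZ r^-1).
by rewrite scalerA -rmorphM mulVf // rmorph1 scale1r.
Qed.

Lemma lie_gen_unscale2 X : L (2%:R *: X) -> L X.
Proof.
by rewrite -(rmorph_nat (real_complex R)); apply: lie_gen_unscale; rewrite pnatr_eq0.
Qed.

Lemma lie_gen_sum (I : finType) (P : pred I) (F : I -> 'M[R[i]]_n) :
  (forall i, P i -> L (F i)) -> L (\sum_(i | P i) F i).
Proof. by move=> h; apply: big_ind; [exact: lie_gen0 | exact: lie_genD | exact: h]. Qed.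

End LieGen.

Section SpecialUnitary.
Variables (R : realType) (n : nat).
Local Notation M := 'M[R[i]]_n.
Implicit Types (i j : 'I_n) (X Y : M).

Lemma in_su0 : in_su (0 : M).
Proof. by split=> [i j|]; rewrite ?mxtrace0 // !entry0 conjc0 oppr0. Qed.

Lemma in_suD X Y : in_su X -> in_su Y -> in_su (X + Y).
Proof.
move=> [sX tX] [sY tY]; split=> [i j|]; last by rewrite mxtraceD tX tY addr0.
by rewrite !entryD conjcD sX sY opprD.
Qed.

Lemma in_suZ (r : R) X : in_su X -> in_su (r%:C *: X).
Proof.
move=> [sX tX]; split=> [i j|]; last by rewrite mxtraceZ tX mulr0.
by rewrite !entryZ conjcM conjc_real sX mulrN.
Qed.

Lemma in_su_br X Y : in_su X -> in_su Y -> in_su (lie_br X Y).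
Proof.
move=> [sX _] [sY _]; split=> [i j|]; last by rewrite /lie_br raddfB /= mxtrace_mulC subrr.
have conj_mul (Z W : M) k l : conjc ((Z *m W) l k) = \sum_m conjc (Z l m) * conjc (W m k).
  by rewrite mxE rmorph_sum; apply: eq_bigr => m _; exact: conjcM.
rewrite /lie_br !entryB conjcB !conj_mul !mxE opprB -!sumrB.
by apply: eq_bigr => m _; rewrite !sX !sY; ring.
Qed.

Lemma lie_gen_in_su (G : M -> Prop) X :
  (forall Y, G Y -> in_su Y) -> lie_gen G X -> in_su X.
Proof. by move=> hG; apply; [| exact: in_su0 | exact: in_suD | exact: in_suZ | exact: in_su_br]. Qed.

Lemma mxtrace_Emx i j : \tr (Emx R i j) = (i == j)%:R.
Proof.
rewrite /mxtrace (bigD1 i) //= EmxE eqxx big1 ?addr0 // => k /negbTE hk.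
by rewrite EmxE hk.
Qed.

Lemma in_su_Bmx i j : i != j -> in_su (Bmx R i j).
Proof.
move=> hij; split=> [r c|].
  by rewrite !BmxE conjcB !conjc_nat; entry_ring.
by rewrite raddfB /= !mxtrace_Emx (negbTE hij) eq_sym (negbTE hij) subrr.
Qed.

Lemma in_su_Cmx i j : i != j -> in_su (Cmx R i j).
Proof.
move=> hij; split=> [r c|].
  by rewrite !CmxE conjcM conjcD !conjc_nat conjc_i; entry_ring.
by rewrite mxtraceZ raddfD /= !mxtrace_Emx (negbTE hij) eq_sym (negbTE hij) addr0 mulr0.
Qed.

Lemma in_su_Dmx i j : in_su (Dmx R i j).
Proof.
split=> [r c|].
  by rewrite !DmxE conjcM conjcB !conjc_nat conjc_i; entry_ring.
by rewrite mxtraceZ raddfB /= !mxtrace_Emx !eqxx subrr mulr0.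
Qed.

Lemma in_su_diag_Re X i : in_su X -> Re (X i i) = 0.
Proof. by case=> sX _; have := congr1 Re (sX i i); rewrite Re_conjc Re_opp => h; lra. Qed.

End SpecialUnitary.

Section Decomposition.
Variables (R : realType) (n : nat).
Local Notation M := 'M[R[i]]_n.
Implicit Types (i j k r c : 'I_n) (X : M).

Lemma sum_delta2 (h : 'I_n -> 'I_n -> R[i]) r c :
  \sum_i \sum_j h i j * ((r == i) && (c == j))%:R = h r c.
Proof.
rewrite (bigD1 r) //= [X in _ + X]big1 ?addr0; last first.
  by move=> i /negbTE hi; apply: big1 => j _; rewrite eq_sym hi mulr0.
rewrite (bigD1 c) //= [X in _ + X]big1 ?addr0; last first.
  by move=> j /negbTE hj; rewrite [c == j]eq_sym hj andbF mulr0.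
by rewrite !eqxx mulr1.
Qed.

Lemma sum_delta2_swap (h : 'I_n -> 'I_n -> R[i]) r c :
  \sum_i \sum_j h i j * ((r == j) && (c == i))%:R = h c r.
Proof. by rewrite exchange_big (sum_delta2 (fun j i => h i j)). Qed.

Lemma sum_delta_diag (h : 'I_n -> R[i]) r c :
  \sum_i h i * ((r == i) && (c == i))%:R = (r == c)%:R * h r.
Proof.
rewrite (bigD1 r) //= [X in _ + X]big1 ?addr0; last first.
  by move=> i /negbTE hi; rewrite eq_sym hi mulr0.
by rewrite eqxx [c == r]eq_sym mulrC.
Qed.

Definition BC_part X i j : M :=
  if (i < j)%N then (Re (X i j))%:C *: Bmx R i j + (Im (X i j))%:C *: Cmx R i j
  else 0.

Lemma BC_partE X i j r c : in_su X -> BC_part X i j r c =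
  (if (i < j)%N then X i j else 0) * ((r == i) && (c == j))%:R
  + (if (i < j)%N then X j i else 0) * ((r == j) && (c == i))%:R.
Proof.
case=> sX _; rewrite /BC_part; case: ifP => _; last by rewrite entry0 !mul0r addr0.
rewrite -[X j i]opprK -sX conjcE entryD (entryZ _ (Bmx _ _ _)) (entryZ _ (Cmx _ _ _)).
by rewrite BmxE CmxE [in X i j * _](complex_decomp (X i j)); ring.
Qed.

Lemma D_partE i0 X r c : in_su X ->
  (\sum_k (- Im (X k k))%:C *: Dmx R i0 k) r c = (r == c)%:R * X r r.
Proof.
move=> hX; have [_ tX] := hX.
have trIm : \sum_k (- Im (X k k))%:C = 0 :> R[i].
  by rewrite -rmorph_sum sumrN -Im_sum -/(\tr X) tX oppr0.
have -> : (\sum_k (- Im (X k k))%:C *: Dmx R i0 k) r c =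
    'i * ((r == i0) && (c == i0))%:R * \sum_k (- Im (X k k))%:C
    - 'i * \sum_k (- Im (X k k))%:C * ((r == k) && (c == k))%:R.
  rewrite summxE !mulr_sumr -sumrB; apply: eq_bigr => k _.
  by rewrite (entryZ _ (Dmx _ _ _)) DmxE; ring.
rewrite trIm sum_delta_diag [in RHS](pure_imaginaryE (in_su_diag_Re r hX)).
by rewrite real_complexN; ring.
Qed.

Lemma su_decomp i0 X : in_su X ->
  X = \sum_i \sum_j BC_part X i j + \sum_k (- Im (X k k))%:C *: Dmx R i0 k.
Proof.
move=> hX; apply/matrixP => r c.
rewrite entryD D_partE // summxE.
under eq_bigr => i _ do rewrite summxE.
under eq_bigr => i _ do under eq_bigr => j _ do rewrite BC_partE //.
under eq_bigr => i _ do rewrite big_split.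
rewrite big_split /= sum_delta2 sum_delta2_swap.
case: (eqVneq r c) => [<-|hrc]; first by rewrite ltnn mul1r !add0r.
rewrite mul0r addr0; case: ltngtP => [_|_|/val_inj hrc']; rewrite ?addr0 ?add0r //.
by rewrite hrc' eqxx in hrc.
Qed.

End Decomposition.

Section Saturation.
Variables (R : realType) (n : nat) (G : 'M[R[i]]_n -> Prop).
Local Notation L := (lie_gen G).
Implicit Types (i j k a b : 'I_n).

Lemma lie_gen_BC_trans i j k : i != j -> j != k -> i != k ->
  L (Bmx R i j) \/ L (Cmx R i j) -> L (Bmx R j k) \/ L (Cmx R j k) ->
  L (Bmx R i k) \/ L (Cmx R i k).
Proof.
move=> hij hjk hik [hX|hX] [hY|hY].
- by left; rewrite -(lie_br_BB _ hij hjk hik); apply: lie_gen_br.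
- by right; rewrite -(lie_br_BC _ hij hjk hik); apply: lie_gen_br.
- by right; rewrite -(lie_br_CB _ hij hjk hik); apply: lie_gen_br.
- by left; apply/lie_genNE; rewrite -(lie_br_CC _ hij hjk hik); apply: lie_gen_br.
Qed.

Lemma lie_gen_Dmx_of_BC a b : a != b -> L (Bmx R a b) -> L (Cmx R a b) -> L (Dmx R a b).
Proof. by move=> hab hB hC; apply: lie_gen_unscale2; rewrite -(lie_br_BC2 _ hab); apply: lie_gen_br. Qed.

Hypothesis BC_everywhere : forall a b, a != b -> L (Bmx R a b) \/ L (Cmx R a b).

Lemma lie_gen_Dmx_spread a b : a != b -> L (Dmx R a b) ->
  forall k, k != a -> L (Bmx R a k) /\ L (Cmx R a k).
Proof.
move=> hab hD k hka; case: (eqVneq k b) => [->|hkb].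
  case: (BC_everywhere hab) => h; split=> //; apply: lie_gen_unscale2.
    by rewrite -(lie_br_DB2 _ hab); apply: lie_gen_br.
  by apply/lie_genNE; rewrite -(lie_br_DC2 _ hab); apply: lie_gen_br.
have hak : a != k by rewrite eq_sym.
have hbk : b != k by rewrite eq_sym.
case: (BC_everywhere hak) => h; split=> //.
  by rewrite -(lie_br_DB _ hab hbk hak); apply: lie_gen_br.
by apply/lie_genNE; rewrite -(lie_br_DC _ hab hbk hak); apply: lie_gen_br.
Qed.

Lemma lie_gen_all_of_pair a b : a != b -> L (Bmx R a b) -> L (Cmx R a b) ->
  forall i j, i != j -> [/\ L (Bmx R i j), L (Cmx R i j) & L (Dmx R i j)].
Proof.
move=> hab hB hC.
have from_a := lie_gen_Dmx_spread hab (lie_gen_Dmx_of_BC hab hB hC).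
have BC_ij i j : i != j -> L (Bmx R i j) /\ L (Cmx R i j).
  case: (eqVneq i a) => [->|hia] hij; first by apply: from_a; rewrite eq_sym.
  have [hBa hCa] := from_a i hia.
  have hai : a != i by rewrite eq_sym.
  have hDia : L (Dmx R i a).
    by rewrite Dmx_swap; apply/lie_genNE; apply: lie_gen_Dmx_of_BC.
  by apply: (lie_gen_Dmx_spread _ hDia); rewrite // eq_sym.
move=> i j hij; have [hBij hCij] := BC_ij i j hij.
by split=> //; apply: lie_gen_Dmx_of_BC.
Qed.

Lemma su_sub_lie_gen (i0 : 'I_n) :
  (forall i j, i != j -> [/\ L (Bmx R i j), L (Cmx R i j) & L (Dmx R i j)]) ->
  forall X, in_su X -> L X.
Proof.
move=> hall X hX; rewrite (su_decomp i0 hX); apply: lie_genD; apply: lie_gen_sum => i _.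
  apply: lie_gen_sum => j _; rewrite /BC_part; case: ltnP => hij; last exact: lie_gen0.
  have [hB hC _] := hall i j (negbT (ltn_eqF hij)).
  by apply: lie_genD; apply: lie_genZ.
case: (eqVneq i0 i) => [<-|h]; first by rewrite /Dmx subrr !scaler0; exact: lie_gen0.
by have [_ _ hD] := hall i0 i h; apply: lie_genZ.
Qed.

End Saturation.

Section Projection.
Variables (R : realType) (n : nat) (G : 'M[R[i]]_n -> Prop) (A : 'M[R[i]]_n).
Hypotheses (hAL : lie_gen G A) (hA : in_su A).
Local Notation L := (lie_gen G).
Implicit Types (a b : 'I_n).

Lemma su_entry_swap a b : A b a = - conjc (A a b).
Proof. by case: hA => sA _; rewrite sA opprK. Qed.

Lemma sqr_add_eq0 (al be : R) : al ^+ 2 + be ^+ 2 = 0 -> al = 0 /\ be = 0.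
Proof.
move/eqP; rewrite paddr_eq0 ?sqr_ge0 // => /andP [ha hb].
by split; apply/eqP; rewrite -sqrf_eq0.
Qed.

Lemma Bmx_without_Cmx a b : a != b -> L (Bmx R a b) -> ~ L (Cmx R a b) ->
  Im (A a a) = Im (A b b) /\ Im (A a b) = 0.
Proof.
move=> hab hB hC.
pose al := 6 * (Im (A a a) - Im (A b b)); pose be := 6 * (2 * Im (A a b)).
have hY : L (al%:C *: Dmx R a b + be%:C *: Cmx R a b).
  suff -> : al%:C *: Dmx R a b + be%:C *: Cmx R a b =
      ad2 (Bmx R a b) (ad2 (Bmx R a b) A) + ad2 (Bmx R a b) A.
    by apply: lie_genD; do ?apply: lie_gen_br.
  rewrite ad2_Bmx_projection // /Dmx /Cmx !scalerA (su_entry_swap a b) conjcE.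
  rewrite (pure_imaginaryE (in_su_diag_Re a hA)) (pure_imaginaryE (in_su_diag_Re b hA)).
  rewrite {1}[A a b]complex_decomp /al /be !(rmorphM, rmorphB, rmorph_nat).
  by congr (_ *: _ + _ *: _); ring.
have hT := lie_genD (lie_genZ (2 * be) hY) (lie_genZ (- al) (lie_gen_br hB hY)).
rewrite extract_Cmx_by_Bmx // in hT.
have [/sqr_add_eq0 [h1 h2]|hne] := eqVneq (al ^+ 2 + be ^+ 2) 0.
  by rewrite /al /be in h1 h2; split; lra.
exfalso; apply: hC; apply: (lie_gen_unscale _ hT).
by rewrite mulf_neq0 // pnatr_eq0.
Qed.

Lemma Cmx_without_Bmx a b : a != b -> L (Cmx R a b) -> ~ L (Bmx R a b) ->
  Im (A a a) = Im (A b b) /\ Re (A a b) = 0.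
Proof.
move=> hab hC hB.
pose al := 6 * (Im (A a a) - Im (A b b)); pose be := 6 * (2 * Re (A a b)).
have hY : L (al%:C *: Dmx R a b + be%:C *: Bmx R a b).
  suff -> : al%:C *: Dmx R a b + be%:C *: Bmx R a b =
      ad2 (Cmx R a b) (ad2 (Cmx R a b) A) + ad2 (Cmx R a b) A.
    by apply: lie_genD; do ?apply: lie_gen_br.
  rewrite ad2_Cmx_projection // /Dmx /Bmx !scalerA (su_entry_swap a b) conjcE.
  rewrite (pure_imaginaryE (in_su_diag_Re a hA)) (pure_imaginaryE (in_su_diag_Re b hA)).
  rewrite {1}[A a b]complex_decomp /al /be !(rmorphM, rmorphB, rmorph_nat).
  by congr (_ *: _ + _ *: _); ring.
have hT := lie_genD (lie_genZ (2 * be) hY) (lie_genZ al (lie_gen_br hC hY)).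
rewrite extract_Bmx_by_Cmx // in hT.
have [/sqr_add_eq0 [h1 h2]|hne] := eqVneq (al ^+ 2 + be ^+ 2) 0.
  by rewrite /al /be in h1 h2; split; lra.
exfalso; apply: hB; apply: (lie_gen_unscale _ hT).
by rewrite mulf_neq0 // pnatr_eq0.
Qed.

End Projection.

Section Signings.
Variables (n : nat) (E : egraph n).
Local Notation red_parity p := (odd (count (fun st => is_red st.2) p)).

Definition balanced (s : 'I_n -> bool) : Prop :=
  forall a b c, E a b c -> is_red c = s a (+) s b.

Lemma walk_end_cat (v : 'I_n) p q : walk_end v (p ++ q) = walk_end (walk_end v p) q.
Proof. by rewrite /walk_end map_cat last_cat. Qed.

Lemma is_walk_cat v p q :
  is_walk E v p -> is_walk E (walk_end v p) q -> is_walk E v (p ++ q).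
Proof. by elim: p v => [|[w c] p IH] v //= [hvw hp] hq; split=> //; apply: IH. Qed.

Lemma balanced_red_parity s v p : balanced s -> is_walk E v p ->
  red_parity p = s v (+) s (walk_end v p).
Proof.
move=> bal; elim: p v => [|[w c] p IH] v /=; first by rewrite /walk_end /= addbb.
case=> hvw hp; rewrite oddD oddb (IH w hp) (bal _ _ _ hvw) /walk_end /=.
by rewrite -addbA [s w (+) _]addbA addbb.
Qed.

Lemma balanced_no_odd_red_cycle s : balanced s -> ~ has_odd_red_cycle E.
Proof.
by move=> bal [v [p [hp [hend]]]]; rewrite (balanced_red_parity bal hp) hend addbb.
Qed.

Section WalkSign.
Variable v0 : 'I_n.
Hypotheses (hconn : connected E) (no_odd : ~ has_odd_red_cycle E).

Lemma red_parity_to_base k p p' :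
  is_walk E k p -> walk_end k p = v0 -> is_walk E k p' -> walk_end k p' = v0 ->
  red_parity p = red_parity p'.
Proof.
have [q [hq hqk]] := hconn v0 k.
suff parity_q r : is_walk E k r -> walk_end k r = v0 -> red_parity r = red_parity q.
  by move=> hp hpe hp' hp'e; rewrite (parity_q p) // (parity_q p').
move=> hr hre; have : ~~ red_parity (q ++ r).
  apply/negP => odd_qr; apply: no_odd; exists v0, (q ++ r).
  by rewrite walk_end_cat hqk hre; split=> //; apply: is_walk_cat; rewrite ?hqk.
by rewrite count_cat oddD negb_add => /eqP.
Qed.

Definition walk_sign k : bool :=
  `[< exists p, [/\ is_walk E k p, walk_end k p = v0 & red_parity p] >].

Lemma walk_signE k p : is_walk E k p -> walk_end k p = v0 -> walk_sign k = red_parity p.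
Proof.
move=> hp hpe; rewrite /walk_sign; case: asboolP => [[p' [hp' hp'e odd_p']]|no_odd_walk].
  by rewrite (red_parity_to_base hp hpe hp' hp'e).
by apply/esym/negP => odd_p; apply: no_odd_walk; exists p.
Qed.

Lemma walk_sign_balanced : balanced walk_sign.
Proof.
move=> a b c hab; have [p [hp hpe]] := hconn b v0.
rewrite (walk_signE hp hpe) (@walk_signE a ((b, c) :: p) (conj hab hp) hpe) /=.
by rewrite oddD oddb addbK.
Qed.

End WalkSign.
End Signings.

Lemma connected_mono (n : nat) (E F : egraph n) :
  (forall a b c, E a b c -> F a b c) -> connected E -> connected F.
Proof.
move=> sEF hconn u v; have [p [hp hpe]] := hconn u v; exists p; split=> //.
by elim: p u hp {hpe} => [|[w c] p IH] u //= [huw hp]; split; [apply: sEF | apply: IH].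
Qed.

Lemma xor_additive_coboundary (T : eqType) (kappa : T -> T -> bool) (t0 : T) :
  (forall a b, kappa a b = kappa b a) ->
  (forall a b c, a != b -> b != c -> a != c -> kappa a c = kappa a b (+) kappa b c) ->
  forall a b, a != b ->
    kappa a b = ((a != t0) && kappa t0 a) (+) ((b != t0) && kappa t0 b).
Proof.
move=> ksym kadd a b hab.
case: (eqVneq a t0) => [<-|ha]; first by rewrite /= eq_sym (negbTE hab).
case: (eqVneq b t0) => [->|hb]; first by rewrite /= addbF ksym.
have hb' : t0 != b by rewrite eq_sym.
by rewrite /= (kadd _ _ _ ha hb' hab) [kappa a t0]ksym.
Qed.

Section TwistedReal.
Variables (R : realType) (n : nat) (s : 'I_n -> bool).
Local Notation M := 'M[R[i]]_n.
Implicit Types (a b k : 'I_n) (X Y : M).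

(* Conjugation by the unitary diag(phase) is a Lie algebra automorphism, so the
   matrices it makes real form a real Lie subalgebra. *)
Definition phase k : R[i] := if s k then 'i%R else 1.

Lemma phaseK k : conjc (phase k) * phase k = 1.
Proof.
by rewrite /phase; case: (s k); rewrite ?conjc_i ?mulNr ?mulcii ?opprK // conjc1 mulr1.
Qed.

Definition twisted_real X : Prop :=
  forall a b, Im (conjc (phase a) * X a b * phase b) = 0.

Lemma twisted_real_entry a b (x : R[i]) :
  (s a = s b -> Im x = 0) -> (s a != s b -> Re x = 0) ->
  Im (conjc (phase a) * x * phase b) = 0.
Proof.
rewrite /phase; case: (s a); case: (s b) => h1 h2;
  rewrite ?conjc_i ?conjc1 !(Im_mul, Re_mul, Im_opp, Re_opp, Re_i, Im_i, Re_1, Im_1).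
- by rewrite h1 //; lra.
- by rewrite h2 //; lra.
- by rewrite h2 //; lra.
- by rewrite h1 //; lra.
Qed.

Lemma twisted_real0 : twisted_real 0.
Proof. by move=> a b; rewrite entry0 mulr0 mul0r. Qed.

Lemma twisted_realD X Y : twisted_real X -> twisted_real Y -> twisted_real (X + Y).
Proof. by move=> hX hY a b; rewrite entryD mulrDr mulrDl Im_add hX hY addr0. Qed.

Lemma twisted_realZ (r : R) X : twisted_real X -> twisted_real (r%:C *: X).
Proof.
move=> hX a b; rewrite entryZ.
have -> : conjc (phase a) * (r%:C * X a b) * phase b =
    r%:C * (conjc (phase a) * X a b * phase b) by ring.
by rewrite Im_mul hX Im_real_complex mulr0 mul0r addr0.
Qed.

Lemma twisted_real_mul X Y : twisted_real X -> twisted_real Y -> twisted_real (X *m Y).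
Proof.
move=> hX hY a b; rewrite mxE mulr_sumr mulr_suml Im_sum big1 // => k _.
have -> : conjc (phase a) * (X a k * Y k b) * phase b =
    (conjc (phase a) * X a k * phase k) * (conjc (phase k) * Y k b * phase b).
  by ring: (phaseK k).
by rewrite Im_mul hX hY mulr0 mul0r addr0.
Qed.

Lemma twisted_real_br X Y : twisted_real X -> twisted_real Y -> twisted_real (lie_br X Y).
Proof.
move=> hX hY a b; rewrite /lie_br entryB mulrBr mulrBl Im_add Im_opp.
by rewrite (twisted_real_mul hX hY) (twisted_real_mul hY hX) subrr.
Qed.

Lemma lie_gen_twisted_real (G : M -> Prop) X :
  (forall Y, G Y -> twisted_real Y) -> lie_gen G X -> twisted_real X.
Proof.
move=> hG; apply; first exact: hG.
- exact: twisted_real0.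
- exact: twisted_realD.
- exact: twisted_realZ.
- exact: twisted_real_br.
Qed.

Lemma Dmx_not_twisted_real a b : a != b -> ~ twisted_real (Dmx R a b).
Proof.
move=> hab /(_ a a); rewrite DmxE eqxx (negbTE hab) /=.
have -> : conjc (phase a) * ('i * (1 - 0)) * phase a = 'i%R by ring: (phaseK a).
by rewrite Im_i => /eqP; rewrite oner_eq0.
Qed.

End TwistedReal.

Section Generators.
Variables (R : realType) (n : nat) (S : gkind -> 'I_n -> 'I_n -> Prop) (A : 'M[R[i]]_n).
Hypotheses (hS : forall g (i j : 'I_n), S g i j -> (i < j)%N) (hA : in_su A).
Local Notation M := 'M[R[i]]_n.
Implicit Types (a b i j k : 'I_n).

Definition gens (Y : M) : Prop := Y = A \/ exists g i j, S g i j /\ Y = gen_mx R g i j.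
Local Notation L := (lie_gen gens).
Local Notation U := (graph_union (graph_A A) (graph_S S)).

Lemma S_neq g i j : S g i j -> i != j.
Proof. by move=> /hS; apply: contraTneq => ->; rewrite ltnn. Qed.

Lemma lie_gen_A : L A.
Proof. by apply: lie_gen_base; left. Qed.

Lemma lie_gen_S g i j : S g i j -> L (gen_mx R g i j).
Proof. by move=> h; apply: lie_gen_base; right; exists g, i, j. Qed.

Lemma lie_gen_sub_su X : L X -> in_su X.
Proof.
apply: lie_gen_in_su => Y [->|[[] [i [j [h ->]]]]] //=.
- exact: in_su_Bmx (S_neq h).
- exact: in_su_Cmx (S_neq h).
- exact: in_su_Dmx.
Qed.

Lemma lie_gen_S_either g a b : S g a b \/ S g b a -> a != b /\ L (gen_mx R g a b).
Proof.
case=> h; first by split; [exact: S_neq h | exact: lie_gen_S h].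
split; first by rewrite eq_sym (S_neq h).
move: (lie_gen_S h); case: g {h} => /=.
- by rewrite Bmx_swap => /lie_genNE.
- by rewrite Cmx_swap.
- by rewrite Dmx_swap => /lie_genNE.
Qed.

Lemma graph_S_edge v w c : graph_S S v w c ->
  v = w \/ v != w /\ (L (Bmx R v w) \/ L (Cmx R v w)).
Proof.
case=> [[_ /(lie_gen_S_either (g := GB)) [? ?]]|[[_ /(lie_gen_S_either (g := GC)) [? ?]]|[_ [-> _]]]].
- by right; split=> //; left.
- by right; split=> //; right.
- by left.
Qed.

Lemma connected_lie_gen_BC : connected (graph_S S) ->
  forall u v, u != v -> L (Bmx R u v) \/ L (Cmx R u v).
Proof.
move=> hconn u v; have [p [hp <-]] := hconn u v.
elim: p u hp => [|[w c] p IH] u /=; first by rewrite /walk_end /= eqxx.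
case=> huw hp; have -> : walk_end u ((w, c) :: p) = walk_end w p by [].
case: (graph_S_edge huw) => [->|[hneq huw']] hue; first exact: IH.
case: (eqVneq w (walk_end w p)) => [<-//|hwe].
exact: lie_gen_BC_trans hneq hwe hue huw' (IH _ hp hwe).
Qed.

Section Balanced.
Variable s : 'I_n -> bool.
Hypotheses (no_loop : ~ has_self_loop U) (bal : balanced U s).

Lemma red_edge_sign a b : U a b Red -> s a != s b.
Proof. by move/bal; case: (s a); case: (s b). Qed.

Lemma blue_edge_sign a b : U a b Blue -> s a = s b.
Proof. by move/bal; case: (s a); case: (s b). Qed.

Lemma no_loop_A_diag a : A a a = 0.
Proof. by apply/eqP/negP => /negP hAa; apply: no_loop; exists a, Green; left; right; right. Qed.

Lemma A_twisted_real : twisted_real s A.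
Proof.
move=> a b; apply: twisted_real_entry => [eq_s|neq_s].
  case: (eqVneq a b) => [<-|hab]; first by rewrite no_loop_A_diag.
  apply/eqP; apply: contraTT (eqxx (s b)) => hIm; rewrite -{1}eq_s red_edge_sign //.
  by left; right; left; split=> //; split=> //; left; rewrite complexIm_eq0.
have hab : a != b by apply: contraNneq neq_s => ->.
apply/eqP; apply: contraTT neq_s => hRe; rewrite negbK (blue_edge_sign (a := a) (b := b)) //.
by left; left; split=> //; split=> //; left; rewrite complexRe_eq0.
Qed.

Lemma gen_twisted_real g i j : S g i j -> twisted_real s (gen_mx R g i j).
Proof.
have U_S c : graph_S S i j c -> U i j c by right.
case: g => h a b /=.
- have eq_s : s i = s j by apply: blue_edge_sign; apply: U_S; left; split=> //; left.
  apply: twisted_real_entry => [_|neq_s]; first by rewrite BmxE Im_add Im_opp !Im_nat subrr.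
  rewrite BmxE; case: (boolP ((a == i) && (b == j))) => [/andP [/eqP ea /eqP eb]|_].
    by rewrite ea eb eq_s eqxx in neq_s.
  case: (boolP ((a == j) && (b == i))) => [/andP [/eqP ea /eqP eb]|_].
    by rewrite ea eb eq_s eqxx in neq_s.
  by rewrite subrr.
- have neq_ij : s i != s j by apply: red_edge_sign; apply: U_S; right; left; split=> //; left.
  apply: twisted_real_entry => [eq_s|_]; last first.
    by rewrite CmxE Re_mul Re_i Im_i Im_add !Im_nat mul0r mul1r addr0 subrr.
  rewrite CmxE; case: (boolP ((a == i) && (b == j))) => [/andP [/eqP ea /eqP eb]|_].
    by move: neq_ij; rewrite -ea -eb eq_s eqxx.
  case: (boolP ((a == j) && (b == i))) => [/andP [/eqP ea /eqP eb]|_].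
    by move: neq_ij; rewrite -ea -eb eq_s eqxx.
  by rewrite addr0 mulr0.
- by case: no_loop; exists i, Green; right; right; right; split=> //; split=> //; exists j; left.
Qed.

Lemma gens_twisted_real Y : gens Y -> twisted_real s Y.
Proof. by case=> [->|[g [i [j [h ->]]]]]; [exact: A_twisted_real | exact: gen_twisted_real h]. Qed.

Lemma balanced_lie_gen_ne_su a b : a != b -> ~ (forall X, L X <-> in_su X).
Proof.
move=> hab gen_su; apply: (Dmx_not_twisted_real hab).
by apply: (lie_gen_twisted_real gens_twisted_real); apply/gen_su/in_su_Dmx.
Qed.

End Balanced.

Section NoFullPair.
Hypothesis BC_everywhere : forall a b, a != b -> L (Bmx R a b) \/ L (Cmx R a b).
Hypothesis no_full_pair : forall a b, a != b -> L (Bmx R a b) -> ~ L (Cmx R a b).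
Variable i0 : 'I_n.

Definition has_Cmx a b : bool := `[< L (Cmx R a b) >].

Lemma has_Cmx_sym a b : has_Cmx a b = has_Cmx b a.
Proof. by rewrite /has_Cmx Cmx_swap. Qed.

Lemma has_Cmx_Bmx a b : a != b -> L (Bmx R a b) <-> has_Cmx a b = false.
Proof.
move=> hab; split=> [hB|/negbT/asboolPn hC].
  exact: asboolF (no_full_pair hab hB).
by case: (BC_everywhere hab) => // /hC.
Qed.

Lemma has_Cmx_trans i j k : i != j -> j != k -> i != k ->
  has_Cmx i k = has_Cmx i j (+) has_Cmx j k.
Proof.
move=> hij hjk hik.
have lie_gen_has_Cmx a b : a != b -> if has_Cmx a b then L (Cmx R a b) else L (Bmx R a b).
  move=> hab; rewrite /has_Cmx; case: asboolP => // hC.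
  by apply/(has_Cmx_Bmx hab); exact: asboolF.
move: (lie_gen_has_Cmx _ _ hij) (lie_gen_has_Cmx _ _ hjk).
case: (has_Cmx i j); case: (has_Cmx j k) => hX hY /=.
- apply/(has_Cmx_Bmx hik)/lie_genNE; rewrite -(lie_br_CC _ hij hjk hik); exact: lie_gen_br.
- apply/asboolP; rewrite -(lie_br_CB _ hij hjk hik); exact: lie_gen_br.
- apply/asboolP; rewrite -(lie_br_BC _ hij hjk hik); exact: lie_gen_br.
- apply/(has_Cmx_Bmx hik); rewrite -(lie_br_BB _ hij hjk hik); exact: lie_gen_br.
Qed.

Definition Cmx_sign k : bool := (k != i0) && has_Cmx i0 k.

Lemma has_Cmx_sign a b : a != b -> has_Cmx a b = Cmx_sign a (+) Cmx_sign b.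
Proof. exact: (xor_additive_coboundary i0 has_Cmx_sym has_Cmx_trans). Qed.

Lemma A_Im_diag_const k : Im (A k k) = Im (A i0 i0).
Proof.
case: (eqVneq k i0) => [->//|hk]; case: (BC_everywhere hk) => h.
  by case: (Bmx_without_Cmx lie_gen_A hA hk h (no_full_pair hk h)).
have nB : ~ L (Bmx R k i0) by move=> hB; exact: no_full_pair hk hB h.
by case: (Cmx_without_Bmx lie_gen_A hA hk h nB).
Qed.

Lemma A_diag_eq0 k : A k k = 0.
Proof.
have Im0 : Im (A i0 i0) = 0.
  have : Im (\tr A) = 0 by case: hA => _ ->.
  rewrite /mxtrace Im_sum; under eq_bigr => j _ do rewrite A_Im_diag_const.
  have n_gt0 : (0 < n)%N := leq_ltn_trans (leq0n i0) (ltn_ord i0).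
  by rewrite sumr_const card_ord => /eqP; rewrite mulrn_eq0 eqn0Ngt n_gt0 => /eqP.
by rewrite (pure_imaginaryE (in_su_diag_Re k hA)) A_Im_diag_const Im0 rmorph0 mulr0.
Qed.

Lemma A_offdiag_Im a b : a != b -> has_Cmx a b = false -> Im (A a b) = 0.
Proof.
move=> hab /(has_Cmx_Bmx hab) hB.
by case: (Bmx_without_Cmx lie_gen_A hA hab hB (no_full_pair hab hB)).
Qed.

Lemma A_offdiag_Re a b : a != b -> has_Cmx a b -> Re (A a b) = 0.
Proof.
move=> hab /asboolP hC; have nB : ~ L (Bmx R a b) by move=> hB; exact: no_full_pair hab hB hC.
by case: (Cmx_without_Bmx lie_gen_A hA hab hC nB).
Qed.

Lemma graph_A_edge_has_Cmx a b c : graph_A A a b c -> a != b /\ is_red c = has_Cmx a b.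
Proof.
have hba (hab : a != b) : b != a by rewrite eq_sym.
case=> [[hab [-> hRe]]|[[hab [-> hIm]]|[-> [_]]]]; last by rewrite A_diag_eq0 eqxx.
- split=> //=; case hk: (has_Cmx a b) => //; move: hRe.
  have hk' : has_Cmx b a by rewrite has_Cmx_sym hk.
  by rewrite !complexRe_eq0 (A_offdiag_Re hab hk) (A_offdiag_Re (hba hab) hk') eqxx; case.
- split=> //=; case hk: (has_Cmx a b) => //; move: hIm.
  have hk' : has_Cmx b a = false by rewrite has_Cmx_sym hk.
  by rewrite !complexIm_eq0 (A_offdiag_Im hab hk) (A_offdiag_Im (hba hab) hk') eqxx; case.
Qed.

Lemma graph_S_edge_has_Cmx a b c : graph_S S a b c -> a != b /\ is_red c = has_Cmx a b.
Proof.
case=> [[-> /lie_gen_S_either [hab hB]]|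
        [[-> /lie_gen_S_either [hab hC]]|[-> [_ [k hD]]]]].
- by split=> //; apply/esym/(has_Cmx_Bmx hab).
- by split=> //; apply/esym/asboolP.
- have [hak hDak] : a != k /\ L (Dmx R a k).
    exact: (lie_gen_S_either (g := GD) hD).
  have hka : k != a by rewrite eq_sym.
  have [hB hC] := lie_gen_Dmx_spread BC_everywhere hak hDak hka.
  by case: (no_full_pair hak hB hC).
Qed.

Lemma no_full_pair_no_cycle : ~ (has_self_loop U \/ has_odd_red_cycle U).
Proof.
have U_edge a b c : U a b c -> a != b /\ is_red c = Cmx_sign a (+) Cmx_sign b.
  move=> hE; have [hab ->] : a != b /\ is_red c = has_Cmx a b.
    by case: hE; [exact: graph_A_edge_has_Cmx | exact: graph_S_edge_has_Cmx].
  by split=> //; exact: has_Cmx_sign.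
case=> [[a [c /U_edge [/eqP //]]]|].
by apply: (balanced_no_odd_red_cycle (s := Cmx_sign)) => a b c /U_edge [].
Qed.

End NoFullPair.
End Generators.

Theorem lemma15 (R : realType) (n : nat) (hn : (2 <= n)%N)
  (S : gkind -> 'I_n -> 'I_n -> Prop)
  (hS : forall k (i j : 'I_n), S k i j -> (i < j)%N)
  (A : 'M[R[i]]_n) (hA : in_su A)
  (hconn : connected (graph_S S)) :
  (forall X : 'M[R[i]]_n,
     lie_gen (fun Y => Y = A \/ exists k i j, S k i j /\ Y = gen_mx R k i j) X
     <-> in_su X)
  <->
  (has_self_loop (graph_union (graph_A A) (graph_S S)) \/
   has_odd_red_cycle (graph_union (graph_A A) (graph_S S))).
Proof.
pose i0 : 'I_n := Ordinal (ltnW hn); pose i1 : 'I_n := Ordinal hn.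
have BC_everywhere := connected_lie_gen_BC A hS hconn.
split=> [gen_su|cycle].
  apply: contrapT => /not_orP [no_loop no_odd].
  have hconnU : connected (graph_union (graph_A A) (graph_S S)).
    by apply: connected_mono hconn => a b c; right.
  have bal := walk_sign_balanced i0 hconnU no_odd.
  exact: (balanced_lie_gen_ne_su no_loop bal (isT : i0 != i1) gen_su).
move=> X; split=> [hX|]; first exact: (lie_gen_sub_su hS hA hX).
pose L := lie_gen (gens S A).
have [[a [b [hab hB hC]]]|no_full] :=
  pselect (exists a b, [/\ a != b, L (Bmx R a b) & L (Cmx R a b)]).
  exact: (su_sub_lie_gen i0 (lie_gen_all_of_pair BC_everywhere hab hB hC)).
have no_full_pair a b : a != b -> L (Bmx R a b) -> ~ L (Cmx R a b).
  by move=> hab hB hC; apply: no_full; exists a, b.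
by case: (no_full_pair_no_cycle hS hA BC_everywhere no_full_pair i0 cycle).
Qed.
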